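(* Let $K$ be a number field, $f$ a monic family homogeneous of degree $d$ and weight $e$, and let $\mathfrak{a},\mathfrak{b}$ be $M_K$-constants as in the following property: for all $v\in M_K$ and $t,z\in K$ with $\log|z|_v>\frac1e\log^+|t|_v+\mathfrak a_v$ one has $|f_t(z)|_v\ge|z|_v$ and $|G_{f_t,v}(z)-\log|z|_v|\le\mathfrak b_v$ (such constants exist, with $\mathfrak b_v=0$ at non-archimedean $v$). Then for any $v\in M_K$, any $t\in K$ with $|t|_v\leq 1$, and any two distinct $x, y\in K$, \[g_{f_t, v}(x, y)\geq -\max\{\mathfrak{a}_v, \mathfrak{b}_v\}-\log 2_v.\]
   Context: $M_K$: places of $K$, absolute values extending standard ones on $\mathbb{Q}$. An $M_K$-constant is a real function on $M_K$ vanishing at all but finitely many places. For $r>0$, $r_v=r$ if $v$ is archimedean and $r_v=1$ otherwise. $\log^+X=\log\max\{1,X\}$. Monic family homogeneous of degree $d$ and weight $e\ge 2$: $f_t(z)=\prod_{i=1}^{d/e}(z^e-\beta_i t)$ with fixed nonzero $\beta_i\in K$. $G_{g,v}(P)=\lim_{n\to\infty}d^{-n}\log^+|g^n(P)|_v$, and $g_{g,v}(x,y)=-\log|x-y|_v+G_{g,v}(x)+G_{g,v}(y)$ for $x\ne y$. *)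

From Stdlib Require Import Reals Classical ClassicalEpsilon.
From HB Require Import structures.
From mathcomp Require Import all_boot all_order all_algebra all_field.
Delimit Scope ring_scope with ring.
Set Implicit Arguments. Unset Strict Implicit. Unset Printing Implicit Defensive.
Import GRing.Theory.
Open Scope R_scope.

Definition intR (z : int) : R :=
  match z with Posz n => INR n | Negz n => Ropp (INR n.+1) end.
Definition ratR (q : rat) : R := Rdiv (intR (numq q)) (intR (denq q)).

(* standard p-adic absolute value on Q: |q|_p = p^(-ord_p q), |0|_p = 0 *)
Definition padicQ (p : nat) (q : rat) : R :=
  if q == GRing.zero then 0
  else powerRZ (INR p)
         (Z.sub (Z.of_nat (logn p `|denq q|%N)) (Z.of_nat (logn p `|numq q|%N))).

Section Places.
Variable K : fieldExtType rat.

Definition is_absval (v : K -> R) : Prop :=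
  (forall x, (0 <= v x)) /\
  (forall x, v x = 0 <-> x = GRing.zero) /\
  (forall x y, v (GRing.mul x y) = v x * v y) /\
  (forall x y, v (GRing.add x y) <= v x + v y).

Definition is_arch (v : K -> R) : Prop :=
  forall q : rat, v (ratr q) = Rabs (ratR q).

Definition extends_padic (p : nat) (v : K -> R) : Prop :=
  forall q : rat, v (ratr q) = padicQ p q.

Definition is_place (v : K -> R) : Prop :=
  is_absval v /\ (is_arch v \/ exists p, prime p /\ extends_padic p v).

Definition MK_const (c : (K -> R) -> R) : Prop :=
  exists l : list (K -> R), forall v, is_place v -> ~ List.In v l -> c v = 0.

Definition rv (r : R) (v : K -> R) : R :=
  if excluded_middle_informative (is_arch v) then r else 1.

(* monic family homogeneous of degree e * size beta and weight e *)
Definition fam (beta : seq K) (e : nat) (t z : K) : K :=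
  (\prod_(bb <- beta) (z ^+ e - bb * t))%ring.
End Places.

Definition logplus (X : R) : R := ln (Rmax 1 X).

(* the limit of a real sequence (0 if it does not converge) *)
Definition lim_seq (u : nat -> R) : R :=
  match excluded_middle_informative (exists l, Un_cv u l) with
  | left H => proj1_sig (constructive_indefinite_description _ H)
  | right _ => 0
  end.

Definition Gv {K : Type} (v : K -> R) (g : K -> K) (d : nat) (P : K) : R :=
  lim_seq (fun n => (logplus (v (iter n g P)) / INR d ^ n)).

Definition gv {K : fieldExtType rat} (v : K -> R) (g : K -> K) (d : nat)
  (x y : K) : R :=
  (- ln (v (x - y)%ring) + Gv v g d x + Gv v g d y).

(* Since [G >= 0] and, for [|t|_v <= 1], [G(z) >= log|z|_v - b_v] as soon as
   [log|z|_v > a_v], we get [G(z) >= log|z|_v - max(a_v, b_v)] for every [z != 0].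
   Taking for [z] whichever of [x], [y] is larger in absolute value, it remains to
   bound [|x - y|_v <= 2_v |z|_v]: this is the triangle inequality at archimedean
   places and the ultrametric inequality, derived by Artin's binomial trick from
   [|n|_v <= 1], at the others. *)
From Stdlib Require Import Reals Lra ClassicalEpsilon.
From mathcomp Require Import all_boot all_order all_algebra all_field.
Set Implicit Arguments.
Import GRing.Theory.
Open Scope R_scope.

Lemma ln_le x y : 0 < x -> x <= y -> ln x <= ln y.
Proof.
move=> x_gt0 /Rle_lt_or_eq_dec [lt_xy|->]; last by right.
by left; apply: ln_increasing.
Qed.

Lemma pow1p_ge_quadratic n h : 0 <= h ->
  1 + INR n * h + INR n * (INR n - 1) / 2 * h ^ 2 <= (1 + h) ^ n.
Proof.
move=> h_ge0; elim: n => [|n IH]; first by simpl; lra.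
rewrite S_INR /=.
have nn1_ge0 : 0 <= INR n * (INR n - 1).
  case: n {IH} => [|n]; first by simpl; lra.
  by rewrite S_INR; have := pos_INR n; nra.
have : 0 <= INR n * (INR n - 1) * h ^ 3 by apply: Rmult_le_pos => //; apply: pow_le.
have : 0 <= INR n * h ^ 2 by apply: Rmult_le_pos; [apply: pos_INR | nra].
have : (1 + h) * (1 + INR n * h + INR n * (INR n - 1) / 2 * h ^ 2)
         <= (1 + h) * (1 + h) ^ n by apply: Rmult_le_compat_l; lra.
simpl; nra.
Qed.

(* A polynomial factor [n + 1] cannot make up for a geometric ratio [S / M > 1]. *)
Lemma le_of_pow_le_linear S M : 0 <= M ->
  (forall n, S ^ n <= INR n.+1 * M ^ n) -> S <= M.
Proof.
move=> M_ge0 bound.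
have /Rle_lt_or_eq_dec [M_gt0|M0] := M_ge0; last first.
  by have := bound 1%N; rewrite -M0 /=; lra.
apply: Rnot_lt_le => lt_MS.
pose h := S / M - 1.
have h_gt0 : 0 < h.
  have : S / M * M = S by field; lra.
  rewrite /h; nra.
have h2_gt0 : 0 < h ^ 2 by apply: pow_lt.
have [N [N_big /lt_0_INR N_gt0]] := archimed_cor1 (h ^ 2 / 4) ltac:(lra).
have Nh2_gt4 : 4 < INR N * h ^ 2.
  have := Rmult_lt_compat_l (INR N) _ _ N_gt0 N_big.
  by rewrite Rinv_r; lra.
pose n := N.+2.
have grow := pow1p_ge_quadratic n (Rlt_le _ _ h_gt0).
have ratio : (1 + h) ^ n <= INR n.+1.
  apply: (Rmult_le_reg_r (M ^ n)); first exact: pow_lt.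
  have -> : (1 + h) ^ n * M ^ n = S ^ n.
    by rewrite -Rpow_mult_distr /h; congr (_ ^ _); field; lra.
  exact: bound.
rewrite /n !S_INR in grow ratio.
have : 0 <= INR N * h by apply: Rmult_le_pos; lra.
nra.
Qed.

Lemma lim_seq_ge0 (u : nat -> R) : (forall n, 0 <= u n) -> 0 <= lim_seq u.
Proof.
move=> u_ge0; rewrite /lim_seq.
case: excluded_middle_informative => [cvg|_]; last lra.
case: (constructive_indefinite_description _ cvg) => l u_cvg /=.
apply: (Rle_cv_lim u_ge0 _ u_cvg) => eps eps_gt0.
by exists 0%N => n _; rewrite /Rdist Rminus_0_r Rabs_R0.
Qed.

Lemma Gv_ge0 {K : Type} (v : K -> R) g d P : 0 <= Gv v g d P.
Proof.
apply: lim_seq_ge0 => n.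
have logplus_ge0 : 0 <= logplus (v (iter n g P)).
  by rewrite /logplus -ln_1; apply: ln_le; [lra | apply: Rmax_l].
have /Rle_lt_or_eq_dec [dn_gt0|<-] : 0 <= INR d ^ n by apply/pow_le/pos_INR.
  by apply: Rmult_le_pos => //; left; apply: Rinv_0_lt_compat.
by rewrite /Rdiv Rinv_0 Rmult_0_r; right.
Qed.

Section AbsoluteValue.
Variables (K : fieldExtType rat) (v : K -> R).
Hypothesis v_absval : is_absval v.

Lemma absv_ge0 x : 0 <= v x.
Proof. by case: v_absval. Qed.

Lemma absv_eq0 x : v x = 0 <-> x = 0%R.
Proof. by case: v_absval => _ []. Qed.

Lemma absv_gt0 x : x <> 0%R -> 0 < v x.
Proof.
move=> x_neq0; case: (Rle_lt_or_eq_dec _ _ (absv_ge0 x)) => // vx0.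
by case: x_neq0; apply/absv_eq0.
Qed.

Lemma absvM x y : v (x * y)%R = v x * v y.
Proof. by case: v_absval => _ [] _ []. Qed.

Lemma absvD x y : v (x + y)%R <= v x + v y.
Proof. by case: v_absval => _ [] _ [] _. Qed.

Lemma absv1 : v 1%R = 1.
Proof.
have := absvM 1%R 1%R; rewrite mulr1 => v1_idem.
have v1_neq0 : v 1%R <> 0 by move/absv_eq0/eqP; rewrite oner_eq0.
have := absv_ge0 1%R; nra.
Qed.

Lemma absvN x : v (- x)%R = v x.
Proof.
have vN1 : v (-1)%R = 1.
  have := absvM (-1)%R (-1)%R; rewrite mulrNN mulr1 absv1.
  have := absv_ge0 (-1)%R; nra.
by rewrite -mulN1r absvM vN1 Rmult_1_l.
Qed.

Lemma absvX x n : v (x ^+ n)%R = v x ^ n.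
Proof. by elim: n => [|n IH]; rewrite ?expr0 ?absv1 // exprS absvM IH. Qed.

Lemma absv_sum_le (F : nat -> K) B m :
  (forall i, (i < m)%N -> v (F i) <= B) ->
  v (\sum_(i < m) F i)%R <= INR m * B.
Proof.
elim: m => [|m IH] F_le.
  by rewrite big_ord0 (proj2 (absv_eq0 _) erefl) /=; lra.
rewrite S_INR Rmult_plus_distr_r Rmult_1_l big_ord_recr /=.
rewrite (eq_bigr (fun i : 'I_m => F i)) //; apply: Rle_trans (absvD _ _) _.
apply: Rplus_le_compat; last exact: F_le.
by apply: IH => i lt_im; apply: F_le; apply: ltnW.
Qed.

Lemma absv_natr_padic p : prime p -> extends_padic p v -> forall n, v n%:R%R <= 1.
Proof.
move=> p_prime v_padic n.
rewrite -(ratr_nat K n) v_padic /padicQ.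
case: eqP => [_|_]; first lra.
have -> : (n%:R : rat)%R = (n%:Z)%:~R%R by rewrite pmulrn.
rewrite numq_int denq_int /= logn1.
have p_ge1 : 1 <= INR p.
  by have /leP/le_INR := prime_gt1 p_prime; rewrite /=; lra.
case: (logn p n) => [|k]; first by simpl; lra.
change (Z.sub (Z.of_nat 0) (Z.of_nat k.+1)) with (Z.neg (Pos.of_succ_nat k)).
rewrite /powerRZ -Rinv_1.
exact: Rinv_le_contravar Rlt_0_1 (pow_R1_Rle _ _ p_ge1).
Qed.

Section Ultrametric.
Hypothesis absv_natr_le1 : forall n, v n%:R%R <= 1.

(* Artin's trick: expand [(x + y) ^ n] and bound each of the [n + 1] terms. *)
Lemma absvDX_le x y n : v (x + y)%R ^ n <= INR n.+1 * Rmax (v x) (v y) ^ n.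
Proof.
rewrite -absvX exprDn.
apply: (absv_sum_le (fun i => x ^+ (n - i) * y ^+ i *+ 'C(n, i))%R) => i lt_in.
rewrite -mulr_natr !absvM !absvX.
have vx_le : v x ^ (n - i) <= Rmax (v x) (v y) ^ (n - i).
  by apply: pow_incr; split; [apply: absv_ge0 | apply: Rmax_l].
have vy_le : v y ^ i <= Rmax (v x) (v y) ^ i.
  by apply: pow_incr; split; [apply: absv_ge0 | apply: Rmax_r].
have -> : Rmax (v x) (v y) ^ n = Rmax (v x) (v y) ^ (n - i) * Rmax (v x) (v y) ^ i.
  by rewrite -pow_add; congr (_ ^ _); rewrite plusE subnK // -ltnS.
have vxy_le := Rmult_le_compat _ _ _ _ (pow_le _ (n - i) (absv_ge0 x))
  (pow_le _ i (absv_ge0 y)) vx_le vy_le.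
have := Rmult_le_pos _ _ (pow_le _ (n - i) (absv_ge0 x)) (pow_le _ i (absv_ge0 y)).
have := absv_natr_le1 'C(n, i); have := absv_ge0 'C(n, i)%:R%R.
nra.
Qed.

Lemma absvD_le_max x y : v (x + y)%R <= Rmax (v x) (v y).
Proof.
apply: le_of_pow_le_linear; last exact: absvDX_le.
exact: Rle_trans (absv_ge0 x) (Rmax_l _ _).
Qed.

End Ultrametric.
End AbsoluteValue.

Lemma rv_gt0 {K : fieldExtType rat} (v : K -> R) : 0 < rv 2 v.
Proof. by rewrite /rv; case: excluded_middle_informative => _ /=; lra. Qed.

Lemma absvB_le_place (K : fieldExtType rat) (v : K -> R) x y : is_place v ->
  v (x - y)%R <= rv 2 v * Rmax (v x) (v y).
Proof.
case=> v_absval v_std; rewrite /rv.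
case: (excluded_middle_informative (is_arch v)) => [_|not_arch] /=.
  apply: Rle_trans (absvD v_absval x (- y)%R) _; rewrite absvN //.
  by have := Rmax_l (v x) (v y); have := Rmax_r (v x) (v y); lra.
case: v_std => [//|[p [p_prime v_padic]]].
have := absvD_le_max v_absval (absv_natr_padic p_prime v_padic) x (- y)%R.
by rewrite absvN // Rmult_1_l.
Qed.

Lemma Gv_ge_ln_sub_max {K : Type} (v : K -> R) g d z A B :
  (A < ln (v z) -> Rabs (Gv v g d z - ln (v z)) <= B) ->
  ln (v z) - Rmax A B <= Gv v g d z.
Proof.
move=> G_near_log; have := Rmax_l A B; have := Rmax_r A B.
case: (Rle_dec (ln (v z)) A) => [|/Rnot_le_lt/G_near_log G_near].
  by have := Gv_ge0 v g d z; lra.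
by have := Rle_abs (ln (v z) - Gv v g d z); rewrite Rabs_minus_sym; lra.
Qed.

Lemma gv_ge_of_Gv_ge_ln (K : fieldExtType rat) (v : K -> R) g d c x y :
  is_place v -> x <> y ->
  (forall z, z <> 0%R -> ln (v z) - c <= Gv v g d z) ->
  gv v g d x y >= - c - ln (rv 2 v).
Proof.
move=> v_place x_neq_y G_ge_ln.
have v_absval : is_absval v by case: v_place.
have vxy_gt0 : 0 < v (x - y)%R.
  by apply: absv_gt0 => // /eqP; rewrite subr_eq0 => /eqP.
have [z [vz_max Gz_le]] :
    exists z, v z = Rmax (v x) (v y) /\ Gv v g d z <= Gv v g d x + Gv v g d y.
  have := Gv_ge0 v g d x; have := Gv_ge0 v g d y.
  case: (Rle_dec (v x) (v y)) => [vx_le | /Rnot_le_lt/Rlt_le vy_le] Gy_ge0 Gx_ge0.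
    by exists y; rewrite Rmax_right //; split; lra.
  by exists x; rewrite Rmax_left //; split; lra.
have vxy_le := absvB_le_place x y v_place; rewrite -vz_max in vxy_le.
have z_neq0 : z <> 0%R.
  move=> z0; move: vxy_le; rewrite z0 (proj2 (absv_eq0 v_absval _) erefl).
  by rewrite Rmult_0_r; apply: Rlt_not_le.
have log_vxy : ln (v (x - y)%R) <= ln (rv 2 v) + ln (v z).
  rewrite -ln_mult; [exact: ln_le | exact: rv_gt0 | exact: absv_gt0].
by have := G_ge_ln z z_neq0; rewrite /gv; lra.
Qed.

Theorem lemma2p2 (K : fieldExtType rat) (e : nat) (beta : seq K)
  (a b : (K -> R) -> R) :
  (2 <= e)%N -> (0 < size beta)%N ->
  (forall bb, bb \in beta -> bb <> GRing.zero) ->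
  MK_const a -> MK_const b ->
  (forall (v : K -> R) (t z : K), is_place v -> z <> GRing.zero ->
     ln (v z) > / INR e * logplus (v t) + a v ->
     v (fam beta e t z) >= v z /\
     Rabs (Gv v (fam beta e t) (e * size beta) z - ln (v z)) <= b v) ->
  forall (v : K -> R) (t x y : K), is_place v -> v t <= 1 -> x <> y ->
    gv v (fam beta e t) (e * size beta) x y
      >= - Rmax (a v) (b v) - ln (rv 2 v).
Proof.
move=> _ _ _ _ _ G_near_log v t x y v_place vt_le1 x_neq_y.
apply: gv_ge_of_Gv_ge_ln => // z z_neq0.
apply: Gv_ge_ln_sub_max => log_gt.
have logplus_t : logplus (v t) = 0 by rewrite /logplus Rmax_left // ln_1.
apply: (proj2 (G_near_log v t z v_place z_neq0 _)).
by rewrite logplus_t Rmult_0_r Rplus_0_l.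
Qed.
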